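(* Let $\epsilon\in\{1,-1\}\subseteq\mathbb{F}_{p^m}$, $\phi(x)=x^2+\epsilon\gamma x+\frac{\gamma^2}{2}$, $\mathsf{R}_{\epsilon\gamma}=R[x]/\langle\phi(x)^{p^s}\rangle$. Let $1\le i\le p^s-1$, $0\le t<i$, and let $h(x)$ be either $0$ or a unit of $\mathsf{R}_{\epsilon\gamma}$ of the form $\sum_{j}(a_{j0}x+b_{j0})\phi(x)^j$ with $a_{j0},b_{j0}\in\mathbb{F}_{p^m}$, $a_{00}x+b_{00}\neq0$. Then the smallest integer $U$ with $u\,\phi(x)^U\in\langle \phi(x)^i+u\,\phi(x)^th(x)\rangle$ is $$U=\begin{cases} i & \text{if } h(x)=0,\\ \min\{i,\ p^s-i+t\} & \text{if } h(x) \text{ is a unit in } \mathsf{R}_{\epsilon\gamma}.\end{cases}$$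
   Context: Let $p$ be an odd prime and $m,s$ positive integers with $p^m\equiv 3\pmod 4$; $\mathbb{F}_{p^m}$ is the field with $p^m$ elements and $R=\mathbb{F}_{p^m}[u]/\langle u^2\rangle$. Fix $\alpha\in\mathbb{F}_{p^m}\setminus\{0\}$ that is not a square in $\mathbb{F}_{p^m}$, let $\alpha_0\in\mathbb{F}_{p^m}$ satisfy $\alpha_0^{p^s}=\alpha$, and let $\gamma\in\mathbb{F}_{p^m}$ satisfy $\gamma^4+4\alpha_0=0$. *)

From HB Require Import structures.
From mathcomp Require Import all_boot all_order all_algebra all_field.
Set Implicit Arguments. Unset Strict Implicit. Unset Printing Implicit Defensive.
Import GRing.Theory.
Local Open Scope ring_scope.

(* An element a0 + u*a1 of R[x], where R = F[u]/<u^2>, is represented by the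
   pair (a0, a1) of polynomials over F (R[x] = F[x] (+) u F[x]). *)
Definition Rpoly (F : fieldType) := ({poly F} * {poly F})%type.

(* multiplication in R[x]:  (a0 + u a1)(b0 + u b1) = a0 b0 + u (a0 b1 + a1 b0) *)
Definition Rmul (F : fieldType) (f g : Rpoly F) : Rpoly F :=
  (f.1 * g.1, f.1 * g.2 + f.2 * g.1).

Definition Rcong (F : fieldType) (M : {poly F}) (f g : Rpoly F) : bool :=
  (M %| f.1 - g.1) && (M %| f.2 - g.2).

Definition Rideal_mem (F : fieldType) (M : {poly F}) (g y : Rpoly F) : Prop :=
  exists f : Rpoly F, Rcong M (Rmul f g) y.

Definition Runit (F : fieldType) (M : {poly F}) (g : Rpoly F) : Prop :=
  exists f : Rpoly F, Rcong M (Rmul f g) (1, 0).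

Definition phi_poly (F : fieldType) (eps gamma : F) : {poly F} :=
  'X^2 + (eps * gamma) *: 'X + (gamma ^+ 2 / 2%:R)%:P.

From HB Require Import structures.
From mathcomp Require Import all_boot all_order all_algebra all_field.
From mathcomp Require Import ring.
Import GRing.Theory.
Local Open Scope ring_scope.

(* Let N = p^s.  Multiplying the generator by u kills its u-component, so
   u phi^i lies in the ideal.  If h is a unit with inverse v, multiplying by
   phi^(N-i) v kills the first component (phi^N = 0) and leaves
   u phi^(N-i+t).  Conversely, if (f1 + u f2)(phi^i + u phi^t h) = u phi^V,
   then phi^(N-i) divides f1, so phi^V = f1 phi^t h + f2 phi^i (mod phi^N) is
   divisible by phi^U0; since phi is not a unit, U0 <= V. *)

Lemma size_phi_poly (F : fieldType) (eps gamma : F) :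
  size (phi_poly eps gamma) = 3%N.
Proof.
rewrite /phi_poly -addrA size_polyDl ?size_polyXn //.
rewrite (leq_ltn_trans (size_polyD _ _)) // gtn_max.
rewrite (leq_ltn_trans (size_scale_leq _ _)) ?size_polyX //.
by rewrite (leq_ltn_trans (size_polyC_leq1 _)).
Qed.

Lemma Rideal_mem_u_fst (F : fieldType) (M : {poly F}) (g : Rpoly F) :
  Rideal_mem M g (0, g.1).
Proof.
by exists (0, 1); rewrite /Rcong /Rmul /= !mul0r mul1r !add0r oppr0 subrr !dvdp0.
Qed.

Section PowerIdeal.

Variables (F : fieldType) (q h : {poly F}) (N i t : nat).
Hypotheses (q_neq0 : q != 0) (le_iN : (i <= N)%N).

Lemma Rideal_mem_unit_exp :
  Runit (q ^+ N) (h, 0) ->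
  Rideal_mem (q ^+ N) (q ^+ i, q ^+ t * h) (0, q ^+ (N - i + t)).
Proof.
case=> [[v w]] /andP[/= inv_vh _].
exists (q ^+ (N - i) * v, 0); rewrite /Rcong /Rmul /= mul0r addr0 subr0.
have -> : q ^+ (N - i) * v * (q ^+ t * h) - q ^+ (N - i + t)
    = q ^+ (N - i + t) * (v * h - 1) by rewrite exprD; ring.
by rewrite mulrAC -exprD subnK // dvdp_mulr ?dvdp_mull.
Qed.

Lemma Rideal_mem_exp_dvd (U V : nat) :
  (U <= i)%N -> q ^+ U %| q ^+ (N - i) * (q ^+ t * h) ->
  Rideal_mem (q ^+ N) (q ^+ i, q ^+ t * h) (0, q ^+ V) ->
  q ^+ U %| q ^+ V.
Proof.
move=> le_Ui dvd_h [[f1 f2]] /andP[/=]; rewrite /Rmul /= subr0 => dvd1.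
have [r ->] : exists r, f1 = r * q ^+ (N - i).
  by apply/dvdpP; rewrite -dvdp_exp_sub.
move=> dvd2.
have dvd_fst : q ^+ U %| r * q ^+ (N - i) * (q ^+ t * h).
  by rewrite -mulrA dvdp_mull.
have dvd_snd : q ^+ U %| f2 * q ^+ i by rewrite dvdp_mull // dvdp_exp2l.
have dvd_N : q ^+ U %| q ^+ N by rewrite dvdp_exp2l // (leq_trans le_Ui).
have := dvdp_sub (dvdp_add dvd_fst dvd_snd) (dvdp_trans dvd_N dvd2).
by rewrite opprB addrC subrK.
Qed.

End PowerIdeal.

Theorem proposition3p13 (p m s : nat) (F : finFieldType)
  (hp : prime p) (hp2 : p != 2%N) (hm : (0 < m)%N) (hs : (0 < s)%N)
  (hcard : #|F| = (p ^ m)%N) (h34 : (p ^ m %% 4 = 3)%N)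
  (alpha alpha0 gamma : F) (halpha : alpha != 0)
  (hnsq : ~ exists y : F, y ^+ 2 = alpha)
  (halpha0 : alpha0 ^+ (p ^ s) = alpha)
  (hgamma : gamma ^+ 4 + 4%:R * alpha0 = 0)
  (eps : F) (heps : eps = 1 \/ eps = -1)
  (i t : nat) (hi1 : (1 <= i)%N) (hi2 : (i <= p ^ s - 1)%N) (ht : (t < i)%N)
  (h : {poly F})
  (hh : h = 0 \/
        (Runit ((phi_poly eps gamma) ^+ (p ^ s)) (h, 0) /\
         exists a b : nat -> F,
           h = \sum_(j < p ^ s) (a j *: 'X + (b j)%:P) * (phi_poly eps gamma) ^+ j
           /\ (a 0%N *: 'X + (b 0%N)%:P != 0))) :
  let phi := phi_poly eps gamma in
  let N := (p ^ s)%N in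
  let P := fun U : nat =>
    Rideal_mem (phi ^+ N) (phi ^+ i, phi ^+ t * h) (0, phi ^+ U) in
  let U0 := if h == 0 then i else minn i (N - i + t) in
  P U0 /\ (forall V : nat, P V -> (U0 <= V)%N).
Proof.
move=> phi N P U0.
have phi_neq0 : phi != 0 by rewrite -size_poly_gt0 size_phi_poly.
have le_iN : (i <= N)%N by rewrite (leq_trans hi2) ?leq_subr.
have [h0 | hn0] := eqVneq h 0.
  rewrite /P /U0 h0 eqxx; split=> [|V PV]; first exact: Rideal_mem_u_fst.
  rewrite -(dvdp_Pexp2l _ _ (d:=phi)) ?size_phi_poly //.
  by apply: Rideal_mem_exp_dvd PV => //; rewrite !mulr0 dvdp0.
have {hh} hunit : Runit (phi ^+ N) (h, 0) by case: hh => [/eqP|[]] //; rewrite (negPf hn0).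
rewrite /P /U0 (negPf hn0); split=> [|V PV].
  case: (leqP i (N - i + t)) => _; first exact: Rideal_mem_u_fst.
  exact: Rideal_mem_unit_exp le_iN hunit.
rewrite -(dvdp_Pexp2l _ _ (d:=phi)) ?size_phi_poly //.
apply: Rideal_mem_exp_dvd PV => //; first exact: geq_minl.
by rewrite mulrA -exprD dvdp_mulr // dvdp_exp2l // geq_minr.
Qed.
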